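(* Let $d_1$ be a positive integer, let $p_{10}<p_{11}<\cdots<p_{1d_1}$ and $p_{20}<p_{21}$ be real numbers (so $d_2=1$), and let $$S=\bigl\{(x_1,x_2,\mu)\in\mathbb{R}^2\times\mathbb{R} : \mu=x_1x_2,\ x_1\in\{p_{10},\dots,p_{1d_1}\},\ x_2\in\{p_{20},p_{21}\}\bigr\}.$$ Let $Q$ be the polyhedron of all $(x_1,x_2,\mu,\boldsymbol{z}_1,z_{21})\in\mathbb{R}^2\times\mathbb{R}\times\mathbb{R}^{d_1}\times\mathbb{R}$ satisfying $x_1=p_{10}+\sum_{j=1}^{d_1}(p_{1j}-p_{1,j-1})z_{1j}$, $1\ge z_{11}\ge\cdots\ge z_{1d_1}\ge 0$, $x_2=p_{20}+(p_{21}-p_{20})z_{21}$, $1\ge z_{21}\ge0$, and, for every $k\in\{0,1,\dots,d_1\}$, \begin{align*} \mu&\le p_{10}p_{20}+\textstyle\sum_{j=1}^{k}p_{20}(p_{1j}-p_{1,j-1})z_{1j}+p_{1k}(p_{21}-p_{20})z_{21}+\sum_{j=k+1}^{d_1}p_{21}(p_{1j}-p_{1,j-1})z_{1j},\\ \mu&\ge p_{10}p_{21}+\textstyle\sum_{j=1}^{k}p_{21}(p_{1j}-p_{1,j-1})z_{1j}+p_{1k}(p_{20}-p_{21})(1-z_{21})+\sum_{j=k+1}^{d_1}p_{20}(p_{1j}-p_{1,j-1})z_{1j}. \end{align*} Then $E=\{(x_1,x_2,\mu,\boldsymbol{z}_1,z_{21})\in Q:(\boldsymbol{z}_1,z_{21})\in\{0,1\}^{d_1+1}\}$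 is an ideal MIP formulation of $S$.
   Context: An MIP formulation of a set $S$ is a set $E=\{(\boldsymbol{x},\boldsymbol{y},\boldsymbol{z})\in Q:\boldsymbol{z}\in\{0,1\}^q\}$, $Q$ a polyhedron, whose projection onto the original variables $\boldsymbol{x}$ equals $S$. It is ideal if every vertex of the LP relaxation $Q$ has $\boldsymbol{z}\in\{0,1\}^q$. *)

From mathcomp Require Import all_boot all_order all_algebra.
Set Implicit Arguments. Unset Strict Implicit. Unset Printing Implicit Defensive.
Import Order.TTheory GRing.Theory Num.Theory.
Local Open Scope ring_scope.

Definition is_vertex (R : realFieldType) (n : nat) (Q : 'rV[R]_n -> Prop)
    (v : 'rV[R]_n) : Prop :=
  Q v /\ forall (a b : 'rV[R]_n) (t : R), Q a -> Q b -> 0 < t < 1 ->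
    v = t *: a + (1 - t) *: b -> a = b.

Definition is_binary (R : realFieldType) (q : nat) (z : 'rV[R]_q) : Prop :=
  forall i : 'I_q, z 0 i = 0 \/ z 0 i = 1.

(* E = {(x,z) in Q : z binary} is an MIP formulation of S (no auxiliary
   continuous variables y here): its projection onto x equals S. *)
Definition mip_formulation (R : realFieldType) (n q : nat)
    (S : 'rV[R]_n -> Prop) (Q : 'rV[R]_(n + q) -> Prop) : Prop :=
  forall x : 'rV[R]_n, S x <-> exists z : 'rV[R]_q, is_binary z /\ Q (row_mx x z).

Definition ideal_formulation (R : realFieldType) (n q : nat)
    (Q : 'rV[R]_(n + q) -> Prop) : Prop :=
  forall v, is_vertex Q v -> is_binary (rsubmx v).

Definition c0 : 'I_3 := @Ordinal 3 0 isT.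
Definition c1 : 'I_3 := @Ordinal 3 1 isT.
Definition c2 : 'I_3 := @Ordinal 3 2 isT.

Definition S_set (R : realFieldType) (d1 : nat) (p1 : 'I_d1.+1 -> R)
    (p20 p21 : R) (x : 'rV[R]_3) : Prop :=
  x 0 c2 = x 0 c0 * x 0 c1 /\ (exists k : 'I_d1.+1, x 0 c0 = p1 k) /\
  (x 0 c1 = p20 \/ x 0 c1 = p21).

(* p1_j - p1_{j-1} for j = i+1, i : 'I_d1 *)
Definition dp (R : realFieldType) (d1 : nat) (p1 : 'I_d1.+1 -> R) (i : 'I_d1) : R :=
  p1 (lift ord0 i) - p1 (widen_ord (leqnSn d1) i).

(* The polyhedron Q, points v = (x1,x2,mu | z_11..z_1d1, z_21);
   z_1j is stored at index j-1 of the z-block, z_21 at the last index. *)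
Definition Q_set (R : realFieldType) (d1 : nat) (p1 : 'I_d1.+1 -> R)
    (p20 p21 : R) (v : 'rV[R]_(3 + d1.+1)) : Prop :=
  let x1 := lsubmx v 0 c0 in
  let x2 := lsubmx v 0 c1 in
  let mu := lsubmx v 0 c2 in
  let z1 := fun i : 'I_d1 => rsubmx v 0 (widen_ord (leqnSn d1) i) in
  let z21 := rsubmx v 0 ord_max in
  [/\ x1 = p1 ord0 + \sum_(i < d1) dp p1 i * z1 i,
      (forall i : 'I_d1, 0 <= z1 i <= 1) /\
      (forall i j : 'I_d1, nat_of_ord j = i.+1 -> z1 j <= z1 i),
      x2 = p20 + (p21 - p20) * z21,
      0 <= z21 <= 1 &
      forall k : 'I_d1.+1,
        mu <= p1 ord0 * p20
              + \sum_(i < d1 | (i < k)%N) p20 * dp p1 i * z1 i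
              + p1 k * (p21 - p20) * z21
              + \sum_(i < d1 | (k <= i)%N) p21 * dp p1 i * z1 i /\
        mu >= p1 ord0 * p21
              + \sum_(i < d1 | (i < k)%N) p21 * dp p1 i * z1 i
              + p1 k * (p20 - p21) * (1 - z21)
              + \sum_(i < d1 | (k <= i)%N) p20 * dp p1 i * z1 i].

From Pilot Require Import Defs.
From mathcomp Require Import all_boot all_order all_algebra.
From mathcomp Require Import ring lra.
Import Order.TTheory GRing.Theory Num.Theory.
Set Implicit Arguments. Unset Strict Implicit. Unset Printing Implicit Defensive.
Local Open Scope ring_scope.

(* Write w = (z1, z21) for the binary block and, eliminating x1, let the k-th
   constraints of Q read lower_k <= mu <= upper_k.

   Projection: a binary z1 with 1 >= z11 >= ... >= z1d1 >= 0 is a unit step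
   (z1j = 1 iff j <= k), which forces x1 = p1k; the two constraints indexed by
   this k pin mu to x1 x2, and they imply all the other ones.

   Ideality: let a in (0,1) be a value taken by w at a vertex v. Moving every
   coordinate of w equal to a by s, for |s| small, keeps w in the box and
   keeps the order among its coordinates, hence also the index k at which
   upper_k is least. If some upper constraint is tight at v, then mu can
   follow upper_k, which is affine along the move, while the lower
   constraints hold because every lower bound lies below every upper bound
   on the box. The reflection (x2, mu, z21, p20, p21) |->
   (-x2, -mu, 1 - z21, -p21, -p20) maps Q onto the polyhedron of the same
   shape and exchanges the two families, which covers a tight lower
   constraint. If no constraint is tight, mu alone can move. In each case v
   is the midpoint of two distinct points of Q. *)

Section Vertices.
Variable R : realFieldType.

Lemma segment_not_vertex n (Q : 'rV[R]_n -> Prop) (v d : 'rV[R]_n) (e : R) :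
  0 < e -> d != 0 -> (forall s, `|s| <= e -> Q (v + s *: d)) -> ~ is_vertex Q v.
Proof.
move=> e_gt0 d_neq0 hQ [_ v_ext].
have norm_e : `|e| <= e by rewrite gtr0_norm.
have half : 0 < (1 / 2 : R) < 1 by apply/andP; split; lra.
have mid : v = 1 / 2 *: (v + e *: d) + (1 - 1 / 2) *: (v + - e *: d).
  have -> : 1 - 1 / 2 = 1 / 2 :> R by lra.
  rewrite scaleNr !scalerDr scalerN addrACA subrr addr0 -scalerDl.
  have -> : 1 / 2 + 1 / 2 = 1 :> R by lra.
  by rewrite scale1r.
have := v_ext _ _ _ (hQ e norm_e) (hQ (- e) _) half mid.
rewrite normrN => /(_ norm_e) /addrI /eqP.
rewrite -subr_eq0 -scalerBl scaler_eq0 (negbTE d_neq0) orbF opprK.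
lra.
Qed.

Lemma vertex_involution n (Q Q' : 'rV[R]_n -> Prop) (f : 'rV[R]_n -> 'rV[R]_n) :
  involutive f -> (forall t a b, f (t *: a + (1 - t) *: b) = t *: f a + (1 - t) *: f b) ->
  (forall v, Q v -> Q' (f v)) -> (forall v, Q' v -> Q (f v)) ->
  forall v, is_vertex Q v -> is_vertex Q' (f v).
Proof.
move=> fK f_affine QQ' Q'Q v [Qv v_ext]; split=> [|a b t Qa Qb t01 fv]; first exact: QQ'.
apply: (can_inj fK); apply: v_ext (Q'Q _ Qa) (Q'Q _ Qb) t01 _.
by rewrite -f_affine -fv fK.
Qed.

End Vertices.

Section Thresholds.
Variable R : realFieldType.

Definition shift_at (a s u : R) := u + s * (u == a)%:R.

Lemma shift_at_small n (w : 'I_n -> R) (a : R) : 0 < a < 1 ->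
  exists2 e : R, 0 < e & forall s, `|s| <= e ->
    (forall i, 0 <= w i <= 1 -> 0 <= shift_at a s (w i) <= 1) /\
    (forall i j, w i <= w j -> shift_at a s (w i) <= shift_at a s (w j)).
Proof.
move=> /andP [a_gt0 a_lt1].
pose gap u := if u == a then 1 else `|u - a|.
pose e := Order.min (Order.min a (1 - a)) (\big[Order.min/1]_i gap (w i)).
have e_gt0 : 0 < e.
  rewrite !lt_min a_gt0 subr_gt0 a_lt1 /=; apply/bigmin_gtP; split=> // i _.
  by rewrite /gap; case: eqVneq => [_|ne]; rewrite ?ltr01 // normr_gt0 subr_eq0.
have e_le_a : e <= a by rewrite !ge_min lexx.
have e_le_1a : e <= 1 - a by rewrite !ge_min lexx orbT.
have e_le_gap i : w i != a -> e <= `|w i - a|.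
  move=> /negbTE wi_neq; rewrite ge_min; apply/orP; right.
  by have := bigmin_le 1 i (fun i => gap (w i)); rewrite /gap wi_neq.
exists e => // s; rewrite ler_norml => /andP [s_lo s_hi]; split=> [i|i j].
  rewrite /shift_at; case: eqP => [->|_]; rewrite ?mulr1 ?mulr0 ?addr0 // => _.
  by apply/andP; split; lra.
rewrite /shift_at; case: (eqVneq (w i) a) => [->|ne_i]; case: (eqVneq (w j) a) => [->|ne_j];
  rewrite ?mulr1 ?mulr0 ?addr0 // => le_ij.
- by have := e_le_gap j ne_j; rewrite ger0_norm ?subr_ge0 //; lra.
- by have := e_le_gap i ne_i; rewrite ler0_norm ?subr_le0 //; lra.
Qed.

Lemma antitone_of_succ n (z : 'I_n -> R) :
  (forall i j : 'I_n, nat_of_ord j = i.+1 -> z j <= z i) ->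
  forall i j : 'I_n, (i <= j)%N -> z j <= z i.
Proof.
move=> z_succ i j /subnK; move: (j - i)%N => m; elim: m j => [|m IH] j j_eq.
  by rewrite (_ : j = i) //; apply: val_inj => /=; rewrite -j_eq.
have lt_mi : (m + i < n)%N by rewrite -addSn j_eq ltnW.
by apply: le_trans (IH (Ordinal lt_mi) erefl); apply: z_succ; rewrite -j_eq.
Qed.

Definition is_threshold n (z : 'I_n -> R) (c : R) (k : 'I_n.+1) :=
  (forall i : 'I_n, (i < k)%N -> c <= z i) /\ (forall i : 'I_n, (k <= i)%N -> z i <= c).

Lemma exists_threshold n (z : 'I_n -> R) (c : R) :
  (forall i j : 'I_n, nat_of_ord j = i.+1 -> z j <= z i) -> exists k, is_threshold z c k.
Proof.
move=> /antitone_of_succ z_anti.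
pose k := find (fun i => z i < c) (enum 'I_n).
have k_le : (k <= n)%N by rewrite -[X in (_ <= X)%N]size_enum_ord find_size.
exists (Ordinal (k_le : (k < n.+1)%N)); split=> i /= ik.
  by have := before_find i ik; rewrite nth_ord_enum => /negbT; rewrite -leNgt.
have k_lt : (k < n)%N by apply: leq_ltn_trans ik (ltn_ord i).
have := nth_find i (_ : has (fun i => z i < c) (enum 'I_n)).
rewrite has_find size_enum_ord => /(_ k_lt) zk_lt.
by apply/ltW/(le_lt_trans _ zk_lt)/z_anti; rewrite nth_enum_ord.
Qed.

Lemma binary_antitone_step n (z : 'I_n -> R) :
  (forall i, z i = 0 \/ z i = 1) ->
  (forall i j : 'I_n, nat_of_ord j = i.+1 -> z j <= z i) ->
  exists k : 'I_n.+1, forall i, z i = (i < k)%:R.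
Proof.
move=> z_bin /(exists_threshold (1 / 2)) [k [z_hi z_lo]]; exists k => i.
case: ltnP => ik /=; [have := z_hi i ik | have := z_lo i ik];
  by case: (z_bin i) => ->; rewrite ?mulr1n; lra.
Qed.

End Thresholds.

Section Formulation.
Variables (R : realFieldType) (d1 : nat) (p1 : 'I_d1.+1 -> R).
Hypothesis p1_incr : forall i j : 'I_d1.+1, (i < j)%N -> p1 i < p1 j.

Local Notation wd := (widen_ord (leqnSn d1)).
Local Notation dp := (dp p1).
Implicit Types (k j : 'I_d1.+1) (x dx : 'rV[R]_3) (w dw : 'rV[R]_d1.+1) (a b c s e : R).

Lemma dp_gt0 i : 0 < dp i.
Proof. by rewrite subr_gt0 p1_incr // lift0. Qed.

Lemma p1_telescope k : p1 k = p1 ord0 + \sum_(i < d1 | (i < k)%N) dp i.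
Proof.
pose f n := p1 (inord n).
have f_val (i : 'I_d1.+1) : f i = p1 i by rewrite /f inord_val.
have k_le : (k <= d1)%N by rewrite -ltnS.
rewrite (eq_bigr (fun i : 'I_d1 => f i.+1 - f i)); last by move=> i _; rewrite /Defs.dp -!f_val.
rewrite -(big_ord_widen d1 (fun n => f n.+1 - f n) k_le).
have := telescope_sumr f (leq0n k); rewrite big_mkord => ->.
by rewrite -(f_val ord0) f_val addrC subrK.
Qed.

Lemma ord_split (i : 'I_d1.+1) : i = ord_max \/ exists j : 'I_d1, i = wd j.
Proof.
case: (unliftP ord_max i) => [j ->|->]; [right | by left].
by exists j; apply: val_inj; exact: lift_max.
Qed.

Lemma wd_neq_max (i : 'I_d1) : (wd i == ord_max) = false.
Proof. by rewrite -val_eqE /= ltn_eqF. Qed.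

Definition dsum w := \sum_(i < d1) dp i * w 0 (wd i).

(* [F k w c] is [p10 c + dsum w] with the first [k] entries of [z1] set to [c] ([FE]). *)
Definition F k w c := p1 k * c + \sum_(i < d1 | (k <= i)%N) dp i * w 0 (wd i).

Lemma FE k w c :
  F k w c = p1 ord0 * c + \sum_(i < d1) dp i * (if (i < k)%N then c else w 0 (wd i)).
Proof.
rewrite /F p1_telescope mulrDl mulr_suml [in RHS](bigID (fun i : 'I_d1 => (i < k)%N)) /=.
rewrite -addrA; congr (_ + (_ + _)); first by apply: eq_bigr => i ->.
by apply: eq_big => i; rewrite leqNgt // => /negbTE ->.
Qed.

Lemma dsumDZ w dw s : dsum (w + s *: dw) = dsum w + s * dsum dw.
Proof.
rewrite /dsum mulr_sumr -big_split; apply: eq_bigr => i _ /=.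
by rewrite !mxE mulrDr mulrCA.
Qed.

Lemma FDZ k w dw c dc s : F k (w + s *: dw) (c + s * dc) = F k w c + s * F k dw dc.
Proof.
rewrite /F mulrDr [s * (_ + _)]mulrDr mulr_sumr addrACA -big_split /= mulrCA.
by congr (_ + _); apply: eq_bigr => i _; rewrite !mxE mulrDr mulrCA.
Qed.

Lemma F_threshold_min k j w c :
  is_threshold (fun i => w 0 (wd i)) c k -> F k w c <= F j w c.
Proof.
move=> [w_hi w_lo]; rewrite !FE lerD2l; apply: ler_sum => i _.
rewrite ler_pM2l ?dp_gt0 //.
by case: (ltnP i k) => ik; case: (ltnP i j) => ij //; [exact: w_hi | exact: w_lo].
Qed.

Lemma dsum_le_F_add k j w c :
  (forall i, 0 <= w 0 (wd i) <= 1) -> 0 <= c <= 1 ->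
  p1 ord0 + dsum w <= F k w c + F j w (1 - c).
Proof.
move=> w01 /andP [c_ge0 c_le1].
rewrite !FE addrACA -mulrDr subrKC mulr1 lerD2l /dsum -big_split /=.
apply: ler_sum => i _; rewrite -mulrDr ler_pM2l ?dp_gt0 //.
by have /andP [? ?] := w01 i; case: ltnP => _; case: ltnP => _; lra.
Qed.

Lemma constraint_sumE a b k w c :
  p1 ord0 * a + \sum_(i < d1 | (i < k)%N) a * dp i * w 0 (wd i) + p1 k * (b - a) * c
    + \sum_(i < d1 | (k <= i)%N) b * dp i * w 0 (wd i)
  = a * (p1 ord0 + dsum w) + (b - a) * F k w c.
Proof.
have scale (P : pred 'I_d1) (y : R) :
    \sum_(i < d1 | P i) y * dp i * w 0 (wd i) = y * \sum_(i < d1 | P i) dp i * w 0 (wd i).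
  by rewrite mulr_sumr; apply: eq_bigr => i _; rewrite mulrA.
rewrite /dsum /F !scale [X in a * (_ + X)](bigID (fun i : 'I_d1 => (i < k)%N)) /=.
suff -> : \sum_(i < d1 | ~~ (i < k)%N) dp i * w 0 (wd i)
          = \sum_(i < d1 | (k <= i)%N) dp i * w 0 (wd i) by ring.
by apply: eq_bigl => i; rewrite -leqNgt.
Qed.

Section Step.
Variables (k : 'I_d1.+1) (w : 'rV[R]_d1.+1).
Hypothesis w_step : forall i : 'I_d1, w 0 (wd i) = (i < k)%:R.

Lemma dsum_step : p1 ord0 + dsum w = p1 k.
Proof.
rewrite [RHS]p1_telescope [in RHS]big_mkcond /dsum /=; congr (_ + _).
by apply: eq_bigr => i _; rewrite w_step mulr_natr; case: (i < k)%N.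
Qed.

Lemma F_step c : F k w c = p1 k * c.
Proof.
rewrite /F big1 ?addr0 // => i; rewrite leqNgt => /negbTE ik.
by rewrite w_step ik mulr0.
Qed.

Lemma threshold_step c : 0 <= c <= 1 -> is_threshold (fun i => w 0 (wd i)) c k.
Proof.
move=> /andP [c_ge0 c_le1]; split=> i; rewrite w_step; first by move=> ->.
by rewrite leqNgt => /negbTE ->.
Qed.

End Step.

Section Bounds.
Variables p20 p21 : R.
Hypothesis p2_lt : p20 < p21.

Definition upper k x w := p20 * x 0 c0 + (p21 - p20) * F k w (w 0 ord_max).

Definition lower k x w := p21 * x 0 c0 + (p20 - p21) * F k w (1 - w 0 ord_max).

Definition Qc x w : Prop :=
  [/\ x 0 c0 = p1 ord0 + dsum w, x 0 c1 = p20 + (p21 - p20) * w 0 ord_max,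
      forall i, 0 <= w 0 i <= 1,
      forall i j : 'I_d1, nat_of_ord j = i.+1 -> w 0 (wd j) <= w 0 (wd i) &
      forall k, lower k x w <= x 0 c2 <= upper k x w].

Lemma Q_setE v : Q_set p1 p20 p21 v <-> Qc (lsubmx v) (rsubmx v).
Proof.
rewrite /Q_set /Qc /upper /lower; set x := lsubmx v; set w := rsubmx v.
have box : (forall i, 0 <= w 0 i <= 1) <->
           (forall i : 'I_d1, 0 <= w 0 (wd i) <= 1) /\ 0 <= w 0 ord_max <= 1.
  split=> [w01 | [z01 y01] i]; first by split=> [i|]; apply: w01.
  by case: (ord_split i) => [->|[j ->]].
split=> [[x1E [z01 z_mono] x2E y01 hc] | [x1E x2E /box [z01 y01] z_mono hc]].
  split=> // [|k]; first exact/box.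
  by rewrite x1E -!constraint_sumE andbC; apply/andP/hc.
split=> // k; have /andP [lo up] := hc k.
by move: lo up; rewrite x1E -!constraint_sumE.
Qed.

Lemma Qc_row x w : Q_set p1 p20 p21 (row_mx x w) <-> Qc x w.
Proof. by rewrite Q_setE row_mxKl row_mxKr. Qed.

Lemma lower_le_upper k j x w :
  x 0 c0 = p1 ord0 + dsum w -> (forall i, 0 <= w 0 i <= 1) -> lower j x w <= upper k x w.
Proof.
move=> x1E w01; have := dsum_le_F_add k j (fun i => w01 (wd i)) (w01 ord_max).
rewrite /upper /lower x1E; set X := p1 ord0 + _; set Fk := F k w _; set Fj := F j w _.
move=> F_ge; rewrite -subr_ge0.
have -> : p20 * X + (p21 - p20) * Fk - (p21 * X + (p20 - p21) * Fj)
          = (p21 - p20) * (Fk + Fj - X) by ring.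
by rewrite mulr_ge0 // subr_ge0 // ltW.
Qed.

Lemma upper_threshold_min k j x w :
  is_threshold (fun i => w 0 (wd i)) (w 0 ord_max) k -> upper k x w <= upper j x w.
Proof. by move=> k_th; rewrite lerD2l ler_pM2l ?subr_gt0 //; exact: F_threshold_min. Qed.

Lemma Qc_not_vertex x w dx dw e :
  0 < e -> row_mx dx dw != 0 ->
  (forall s, `|s| <= e -> Qc (x + s *: dx) (w + s *: dw)) ->
  ~ is_vertex (Q_set p1 p20 p21) (row_mx x w).
Proof.
move=> e_gt0 d_neq0 hQ; apply: (segment_not_vertex e_gt0 d_neq0) => s /hQ.
by rewrite scale_row_mx add_row_mx Qc_row.
Qed.

Lemma upper_tight_not_vertex x w k0 i0 :
  Qc x w -> x 0 c2 = upper k0 x w -> 0 < w 0 i0 < 1 ->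
  ~ is_vertex (Q_set p1 p20 p21) (row_mx x w).
Proof.
move=> [x1E x2E w01 w_mono hc] mu_tight w_frac; set a := w 0 i0.
have [e e_gt0 shift_ok] := shift_at_small (fun i => w 0 i) w_frac.
have [k k_th] := exists_threshold (w 0 ord_max) w_mono.
have mu_k : x 0 c2 = upper k x w.
  apply/le_anti; have /andP [_ ->] := hc k.
  by rewrite mu_tight upper_threshold_min.
(* [x1] and [x2] move with [w] as the equations of [Q] demand, [mu] along [upper k]. *)
pose dw := \row_i (w 0 i == a)%:R : 'rV[R]_d1.+1.
pose dx := \row_l [:: dsum dw; (p21 - p20) * dw 0 ord_max;
                     p20 * dsum dw + (p21 - p20) * F k dw (dw 0 ord_max)]`_l : 'rV[R]_3.
apply: (Qc_not_vertex (dx := dx) (dw := dw) e_gt0).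
  rewrite row_mx_eq0 negb_and orbC; apply/orP; left.
  by apply/eqP => /rowP /(_ i0); rewrite !mxE eqxx; apply/eqP/oner_neq0.
move=> s /shift_ok [shift01 shift_mono].
have w'E i : (w + s *: dw) 0 i = shift_at a s (w 0 i) by rewrite !mxE.
have x1' : (x + s *: dx) 0 c0 = p1 ord0 + dsum (w + s *: dw).
  by rewrite !mxE /= x1E dsumDZ addrA.
have w01' i : 0 <= (w + s *: dw) 0 i <= 1 by rewrite w'E; apply: shift01.
have k_th' : is_threshold (fun i => (w + s *: dw) 0 (wd i)) ((w + s *: dw) 0 ord_max) k.
  by case: k_th => w_hi w_lo; split=> i ik; rewrite !w'E; apply: shift_mono; auto.
split=> // [|i j ij|j].
- by rewrite !mxE /= x2E; ring.
- by rewrite !w'E; apply/shift_mono/w_mono.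
have -> : (x + s *: dx) 0 c2 = upper k (x + s *: dx) (w + s *: dw).
  by rewrite /upper !mxE /= FDZ mu_k /upper x1E; ring.
by rewrite lower_le_upper ?upper_threshold_min.
Qed.

Lemma slack_not_vertex x w :
  Qc x w -> (forall k, lower k x w < x 0 c2 < upper k x w) ->
  ~ is_vertex (Q_set p1 p20 p21) (row_mx x w).
Proof.
move=> [x1E x2E w01 w_mono _] slack.
pose e := \big[Order.min/1]_k Order.min (upper k x w - x 0 c2) (x 0 c2 - lower k x w).
have e_gt0 : 0 < e.
  apply/bigmin_gtP; split=> // k _.
  by have /andP [lo up] := slack k; rewrite lt_min !subr_gt0 lo up.
pose dx := \row_l (l == c2)%:R : 'rV[R]_3.
apply: (Qc_not_vertex (dx := dx) (dw := 0) e_gt0).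
  rewrite row_mx_eq0 negb_and; apply/orP; left.
  by apply/eqP => /rowP /(_ c2); rewrite !mxE eqxx; apply/eqP/oner_neq0.
move=> s; rewrite scaler0 addr0 ler_norml => /andP [s_lo s_hi].
have x'E l : (x + s *: dx) 0 l = x 0 l + s * (l == c2)%:R by rewrite !mxE.
split=> //; rewrite ?x'E ?mulr0 ?addr0 // => k.
have [e_up e_lo] : e <= upper k x w - x 0 c2 /\ e <= x 0 c2 - lower k x w.
  by apply/andP; rewrite -le_min; exact: bigmin_le.
rewrite /upper /lower x'E mulr0 addr0 mulr1 -/(upper k x w) -/(lower k x w).
by apply/andP; split; lra.
Qed.

Lemma Qc_step x w k : (forall i : 'I_d1, w 0 (wd i) = (i < k)%:R) ->
  Qc x w <-> [/\ x 0 c0 = p1 k, x 0 c1 = p20 + (p21 - p20) * w 0 ord_max,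
                0 <= w 0 ord_max <= 1 & x 0 c2 = x 0 c0 * x 0 c1].
Proof.
move=> w_step; have Fk := F_step w_step.
split=> [[x1E x2E w01 _ hc] | [x1E x2E y01 mu_eq]].
  have x1k : x 0 c0 = p1 k by rewrite x1E (dsum_step w_step).
  split=> //; have /andP [] := hc k; rewrite /upper /lower !Fk x1k x2E => lo up.
  by apply/le_anti/andP; split; lra.
have F_ge j c : 0 <= c <= 1 -> p1 k * c <= F j w c.
  by move=> c01; rewrite -Fk; exact: F_threshold_min (threshold_step w_step c01).
have y01' : 0 <= 1 - w 0 ord_max <= 1 by case/andP: y01 => ? ?; apply/andP; split; lra.
split=> // [|i|i j ij|j]; first by rewrite x1E (dsum_step w_step).
- case: (ord_split i) => [->|[j ->]] //.
  by rewrite w_step ler0n lern1 leq_b1.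
- rewrite !w_step ler_nat; case: (ltnP j k) => // jk.
  by rewrite (@ltn_trans j) // ij.
have p2_ge0 : 0 <= p21 - p20 by rewrite subr_ge0 ltW.
have := ler_wpM2l p2_ge0 (F_ge j _ y01); have := ler_wpM2l p2_ge0 (F_ge j _ y01').
by rewrite /upper /lower mu_eq x1E x2E => ? ?; apply/andP; split; lra.
Qed.

End Bounds.

Definition reflect_x x : 'rV[R]_3 := \row_l (if l == c0 then x 0 l else - x 0 l).
Definition reflect_w w : 'rV[R]_d1.+1 := \row_i (if i == ord_max then 1 - w 0 i else w 0 i).
Definition reflect_pt (v : 'rV[R]_(3 + d1.+1)) :=
  row_mx (reflect_x (lsubmx v)) (reflect_w (rsubmx v)).

Lemma reflect_ptK : involutive reflect_pt.
Proof.
move=> v; rewrite /reflect_pt row_mxKl row_mxKr -[RHS]hsubmxK.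
by congr row_mx; apply/rowP => l; rewrite !mxE; case: eqP; rewrite ?opprK ?subKr.
Qed.

Lemma reflect_pt_affine t u v :
  reflect_pt (t *: u + (1 - t) *: v) = t *: reflect_pt u + (1 - t) *: reflect_pt v.
Proof.
rewrite -[u]hsubmxK -[v]hsubmxK /reflect_pt !scale_row_mx !add_row_mx !row_mxKl !row_mxKr.
by congr row_mx; apply/rowP => l; rewrite !mxE; case: eqP => _; ring.
Qed.

Lemma reflect_w_wd w i : reflect_w w 0 (wd i) = w 0 (wd i).
Proof. by rewrite mxE wd_neq_max. Qed.

Lemma reflect_w_max w : reflect_w w 0 ord_max = 1 - w 0 ord_max.
Proof. by rewrite mxE eqxx. Qed.

Lemma F_reflect_w k w c : F k (reflect_w w) c = F k w c.
Proof. by congr (_ + _); apply: eq_bigr => i _; rewrite reflect_w_wd. Qed.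

Lemma dsum_reflect_w w : dsum (reflect_w w) = dsum w.
Proof. by apply: eq_bigr => i _; rewrite reflect_w_wd. Qed.

Lemma upper_reflect p20 p21 k x w :
  upper (- p21) (- p20) k (reflect_x x) (reflect_w w) = - lower p20 p21 k x w.
Proof. by rewrite /upper /lower F_reflect_w reflect_w_max mxE eqxx; ring. Qed.

Lemma lower_reflect p20 p21 k x w :
  lower (- p21) (- p20) k (reflect_x x) (reflect_w w) = - upper p20 p21 k x w.
Proof. by rewrite /upper /lower F_reflect_w reflect_w_max subKr mxE eqxx; ring. Qed.

Lemma Qc_reflect p20 p21 x w :
  Qc p20 p21 x w -> Qc (- p21) (- p20) (reflect_x x) (reflect_w w).
Proof.
move=> [x1E x2E w01 w_mono hc]; split.
- by rewrite mxE eqxx dsum_reflect_w.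
- by rewrite mxE /= reflect_w_max x2E; ring.
- move=> i; rewrite mxE; case: eqP => _ //.
  by have /andP [? ?] := w01 i; apply/andP; split; lra.
- by move=> i j ij; rewrite !reflect_w_wd; apply: w_mono.
by move=> k; rewrite upper_reflect lower_reflect mxE /= !lerN2 andbC; apply: hc.
Qed.

Lemma lower_tight_not_vertex p20 p21 x w k0 i0 : p20 < p21 ->
  Qc p20 p21 x w -> x 0 c2 = lower p20 p21 k0 x w -> 0 < w 0 i0 < 1 ->
  ~ is_vertex (Q_set p1 p20 p21) (row_mx x w).
Proof.
move=> p2_lt hQ mu_tight w_frac vert.
have reflect_Q v : Q_set p1 p20 p21 v -> Q_set p1 (- p21) (- p20) (reflect_pt v).
  by rewrite !Q_setE /reflect_pt row_mxKl row_mxKr => /Qc_reflect.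
have reflect_Q' v : Q_set p1 (- p21) (- p20) v -> Q_set p1 p20 p21 (reflect_pt v).
  by rewrite !Q_setE /reflect_pt row_mxKl row_mxKr => /Qc_reflect; rewrite !opprK.
have := vertex_involution reflect_ptK reflect_pt_affine reflect_Q reflect_Q' vert.
rewrite /reflect_pt row_mxKl row_mxKr.
apply: (upper_tight_not_vertex _ (Qc_reflect hQ) (k0 := k0) (i0 := i0)).
- by rewrite ltrN2.
- by rewrite upper_reflect mxE /= mu_tight.
rewrite mxE; case: eqP => _ //.
by case/andP: w_frac => ? ?; apply/andP; split; lra.
Qed.

Lemma Q_ideal p20 p21 : p20 < p21 -> ideal_formulation (Q_set p1 p20 p21).
Proof.
move=> p2_lt v; rewrite -[v]hsubmxK row_mxKr; move: (lsubmx v) (rsubmx v) => x w vert i0.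
have hQ : Qc p20 p21 x w by apply/Qc_row; case: vert.
have [w0|w_ne0] := eqVneq (w 0 i0) 0; first by left.
have [w1|w_ne1] := eqVneq (w 0 i0) 1; first by right.
have w_frac : 0 < w 0 i0 < 1.
  by case: hQ => _ _ w01 _ _; move: (w01 i0); rewrite !lt_def w_ne0 eq_sym w_ne1.
exfalso.
have [/existsP [k /eqP mu_up] | not_up] := boolP [exists k, x 0 c2 == upper p20 p21 k x w].
  exact: upper_tight_not_vertex hQ mu_up w_frac vert.
have [/existsP [k /eqP mu_lo] | not_lo] := boolP [exists k, x 0 c2 == lower p20 p21 k x w].
  exact: lower_tight_not_vertex p2_lt hQ mu_lo w_frac vert.
apply: (slack_not_vertex hQ _ vert) => k; case: hQ => _ _ _ _ /(_ k) /andP [lo up].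
move/existsPn/(_ k): not_up; move/existsPn/(_ k): not_lo.
by rewrite !lt_neqAle lo up eq_sym => -> ->.
Qed.

Lemma Q_mip_formulation p20 p21 : p20 < p21 ->
  mip_formulation (S_set p1 p20 p21) (Q_set p1 p20 p21).
Proof.
move=> p2_lt x; split=> [[mu_eq [[k x1k] x2_bin]] | [w [w_bin /Qc_row hQ]]].
  pose y : R := (x 0 c1 == p21)%:R.
  pose w := \row_i (if i == ord_max then y else (i < k)%:R) : 'rV[R]_d1.+1.
  have w_step i : w 0 (wd i) = (i < k)%:R by rewrite mxE wd_neq_max.
  exists w; split.
    by move=> i; rewrite mxE; case: ifP => _; [rewrite /y; case: eqP | case: ltnP]; auto.
  apply/Qc_row/(Qc_step p2_lt x w_step); split=> //; rewrite mxE eqxx /y.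
    by case: x2_bin => ->; rewrite ?eqxx ?(lt_eqF p2_lt) /= ?mulr0n ?mulr1n; ring.
  by case: eqP; rewrite ?ler01 ?lexx.
case: (hQ) => _ _ _ w_mono _.
have [k w_step] := binary_antitone_step (fun i => w_bin (wd i)) w_mono.
have [x1k x2E y01 mu_eq] := (Qc_step p2_lt x w_step).1 hQ.
split=> //; split; first by exists k.
by rewrite x2E; case: (w_bin ord_max) => ->; [left | right]; ring.
Qed.

End Formulation.

Theorem proposition2 (R : realFieldType) (d1 : nat) (hd1 : (0 < d1)%N)
    (p1 : 'I_d1.+1 -> R) (p20 p21 : R)
    (hp1 : forall i j : 'I_d1.+1, (i < j)%N -> p1 i < p1 j)
    (hp2 : p20 < p21) :
  mip_formulation (S_set p1 p20 p21) (Q_set p1 p20 p21) /\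
  ideal_formulation (Q_set p1 p20 p21).
Proof.
by split; [exact: Q_mip_formulation | exact: Q_ideal].
Qed.
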